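(* Let $\pi$ be a permutation-invariant probability density on $\mathbb{X}^n$ and $q$ a probability density on $\mathbb{X}$. For every $x\in\mathbb{X}^n$, $y\in\mathbb{X}$ and $i\in\{1,\dots,n\}$, $$\alpha_i^{\mathrm{IMwG}}(y,x)=\min\Big\{1,\frac{w_i(y,x)}{w_0(y,x)}\Big\}\le \alpha_i^{\mathrm{SOMA}}(y,x).$$
   Context: Permutation invariance: $\pi(x_{\sigma(1)},\dots,x_{\sigma(n)})=\pi(x)$ for all permutations $\sigma$. $[x_{-i},y]$ is $x$ with its $i$-th component replaced by $y$. Weights: $w_i(y,x)=\pi([x_{-i},y])/\big(q(y)\prod_{j\ne i}q(x_j)\big)$ for $1\le i\le n$, $w_0(y,x)=\pi(x)/\prod_{j=1}^n q(x_j)$, $W(y,x)=\sum_{i=1}^n w_i(y,x)$ (assumed well-defined and positive). The independent-Metropolis-within-Gibbs acceptance probability for replacing $x_i$ by $y$ is $\alpha_i^{\mathrm{IMwG}}(y,x)=\min\{1,\pi([x_{-i},y])q(x_i)/(\pi(x)q(y))\}$. The SOMA acceptance probability is $\alpha_i^{\mathrm{SOMA}}(y,x)=\min\{1,W(y,x)/(W(y,x)+w_0(y,x)-w_i(y,x))\}$. *)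

From HB Require Import structures.
From mathcomp Require Import all_boot all_order all_algebra all_fingroup.
From mathcomp Require Import all_classical all_reals.
Set Implicit Arguments. Unset Strict Implicit. Unset Printing Implicit Defensive.
Import Order.TTheory GRing.Theory Num.Theory.
Local Open Scope ring_scope.

(* Points of X^n are functions 'I_n -> X (components indexed 0..n-1). *)

Definition repl (X : Type) (n : nat) (x : 'I_n -> X) (i : 'I_n) (y : X) : 'I_n -> X :=
  fun k => if k == i then y else x k.

Definition perm_invariant (R : realType) (X : Type) (n : nat)
  (pi : ('I_n -> X) -> R) : Prop :=
  forall (s : 'S_n) (x : 'I_n -> X), pi (fun k => x (s k)) = pi x.

Definition w_i (R : realType) (X : Type) (n : nat) (pi : ('I_n -> X) -> R)
  (q : X -> R) (i : 'I_n) (y : X) (x : 'I_n -> X) : R :=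
  pi (repl x i y) / (q y * \prod_(j < n | j != i) q (x j)).

Definition w_0 (R : realType) (X : Type) (n : nat) (pi : ('I_n -> X) -> R)
  (q : X -> R) (y : X) (x : 'I_n -> X) : R :=
  pi x / \prod_(j < n) q (x j).

Definition W (R : realType) (X : Type) (n : nat) (pi : ('I_n -> X) -> R)
  (q : X -> R) (y : X) (x : 'I_n -> X) : R :=
  \sum_(i < n) w_i pi q i y x.

Definition alpha_IMwG (R : realType) (X : Type) (n : nat) (pi : ('I_n -> X) -> R)
  (q : X -> R) (i : 'I_n) (y : X) (x : 'I_n -> X) : R :=
  Num.min 1 (pi (repl x i y) * q (x i) / (pi x * q y)).

Definition alpha_SOMA (R : realType) (X : Type) (n : nat) (pi : ('I_n -> X) -> R)
  (q : X -> R) (i : 'I_n) (y : X) (x : 'I_n -> X) : R :=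
  Num.min 1 (W pi q y x / (W pi q y x + w_0 pi q y x - w_i pi q i y x)).

From HB Require Import structures.
From mathcomp Require Import all_boot all_order all_algebra all_fingroup.
From mathcomp Require Import all_classical all_reals.
From mathcomp Require Import ring lra.
Set Implicit Arguments. Unset Strict Implicit.
Import Order.TTheory GRing.Theory Num.Theory.
Local Open Scope ring_scope.

(* The IMwG ratio is w_i / w_0, while the SOMA ratio adds the same nonnegative
   quantity, the sum of the w_j with j != i, to its numerator and denominator;
   this moves a ratio towards 1 and can only increase its minimum with 1. *)

Lemma le_min1_divDD (R : realFieldType) (a b c : R) :
  0 <= a -> 0 <= b -> 0 <= c ->
  Num.min 1 (a / b) <= Num.min 1 ((a + c) / (b + c)).
Proof.
move=> a_ge0 b_ge0 c_ge0; rewrite le_min ge_min lexx /=.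
have [->|b_neq0] := eqVneq b 0.
  by rewrite invr0 mulr0 ge_min divr_ge0 ?orbT // addr_ge0.
have b_gt0 : 0 < b by rewrite lt_def b_neq0 b_ge0.
have bc_gt0 : 0 < b + c by lra.
have [le_ba|lt_ab] := leP b a.
  by rewrite ge_min ler_pdivlMr // mul1r lerD2r le_ba.
rewrite ge_min; apply/orP; right.
rewrite ler_pdivrMr // mulrAC ler_pdivlMr //; nra.
Qed.

Section Weights.

Variables (R : realType) (X : Type) (n : nat).
Variables (pi : ('I_n -> X) -> R) (q : X -> R) (x : 'I_n -> X) (y : X).
Hypothesis pi_ge0 : forall z, 0 <= pi z.
Hypothesis qy_gt0 : 0 < q y.
Hypothesis qx_gt0 : forall j, 0 < q (x j).

Lemma w_i_ge0 (i : 'I_n) : 0 <= w_i pi q i y x.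
Proof. by rewrite divr_ge0 // mulr_ge0 ?ltW // prodr_gt0. Qed.

Lemma w_0_ge0 : 0 <= w_0 pi q y x.
Proof. rewrite divr_ge0 //; apply: prodr_ge0 => j _; exact: ltW. Qed.

(* Both sides carry the factor (pi x)^-1, so the identity also holds when
   pi x = 0, both ratios being 0 then. *)
Lemma alpha_IMwG_ratio (i : 'I_n) :
  alpha_IMwG pi q i y x = Num.min 1 (w_i pi q i y x / w_0 pi q y x).
Proof.
have P_gt0 : 0 < \prod_(j < n | j != i) q (x j) by exact: prodr_gt0.
rewrite /alpha_IMwG /w_i /w_0 [X in pi x / X](bigD1 i) //=.
congr (Num.min 1 _).
rewrite !invfM !invrK; set pix := (pi x)^-1.
by field; rewrite !lt0r_neq0.
Qed.

End Weights.

Theorem theorem2 (R : realType) (X : Type) (n : nat)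
  (pi : ('I_n -> X) -> R) (q : X -> R)
  (pi_ge0 : forall z, 0 <= pi z) (q_ge0 : forall t, 0 <= q t)
  (pi_perm : perm_invariant pi)
  (x : 'I_n -> X) (y : X) (i : 'I_n)
  (qy_gt0 : 0 < q y) (qx_gt0 : forall j, 0 < q (x j))
  (W_gt0 : 0 < W pi q y x) :
  alpha_IMwG pi q i y x = Num.min 1 (w_i pi q i y x / w_0 pi q y x) /\
  alpha_IMwG pi q i y x <= alpha_SOMA pi q i y x.
Proof.
have ratio := alpha_IMwG_ratio pi qy_gt0 qx_gt0 i.
split=> //; rewrite ratio /alpha_SOMA /W (bigD1 i) //=.
set wi := w_i pi q i y x; set w0 := w_0 pi q y x.
set rest := \sum_(j < n | j != i) _.
have rest_ge0 : 0 <= rest by apply: sumr_ge0 => j _; exact: w_i_ge0.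
have -> : wi + rest + w0 - wi = w0 + rest by ring.
exact: le_min1_divDD (w_i_ge0 pi_ge0 qy_gt0 qx_gt0 i)
  (w_0_ge0 y pi_ge0 qx_gt0) rest_ge0.
Qed.
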